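(* Let $f:\mathbb{R}^d\to\mathbb{R}$ be convex and $M$-Lipschitz with $X^*\neq\emptyset$. Run the Proximal Bundle Method with $\beta\in(0,1)$ and stepsizes $\rho_k=(f(x_k)-f^* )/D^2$, where $D^2>0$ is any number with $D^2\ge\sup\{\mathrm{dist}(x,X^* )^2: f(x)\le f(x_0)\}$. Then for any $0<\epsilon\le f(x_0)-f^*$, the number of descent steps taken before an $\epsilon$-minimizer is found is at most $$\left\lceil\frac{2\log\left(\frac{f(x_0)-f^*}{\epsilon}\right)}{\beta}\right\rceil,$$ and the number of null steps taken before then is at most $$\left(\frac{1}{1-(1-\beta/2)^2}\right)\frac{8M^2D^2}{(1-\beta)^2\epsilon^2}.$$
   Context: Throughout, $f:\mathbb{R}^d\to\mathbb{R}$ is a proper closed convex function attaining its minimum $f^*=\inf f$ on the nonempty set $X^*=\{x: f(x)=f^*\}$; $\mathrm{dist}(x,S)=\inf_{y\in S}\|x-y\|$; $\partial f(x)$ is the convex subdifferential. A subgradient oracle returns, for any $x$, the value $f(x)$ and some $g(x)\in\partial f(x)$. Proximal Bundle Method: fix $\beta\in(0,1)$, $x_0=z_0\in\mathbb{R}^d$, $g_0=g(x_0)$, and the initial model $f_0(x)=f(x_0)+\langle g_0,x-x_0\rangle$. At iteration $k\ge0$, given a convex model $f_k:\mathbb{R}^d\to\mathbb{R}$ and stepsize $\rho_k>0$, compute $z_{k+1}=\operatorname{argmin}_z f_k(z)+\frac{\rho_k}{2}\|z-x_k\|^2$. If $\beta(f(x_k)-f_k(z_{k+1}))\le f(x_k)-f(z_{k+1})$,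 iteration $k$ is a descent step and $x_{k+1}=z_{k+1}$; otherwise it is a null step and $x_{k+1}=x_k$. Then a new convex model $f_{k+1}$ and stepsize $\rho_{k+1}$ are chosen satisfying, with $g_{k+1}=g(z_{k+1})$ and $s_{k+1}=\rho_k(x_k-z_{k+1})$: (1) $f_{k+1}(x)\le f(x)$ for all $x$; (2) $f_{k+1}(x)\ge f(z_{k+1})+\langle g_{k+1},x-z_{k+1}\rangle$ for all $x$; (3) if iteration $k$ was a null step, $f_{k+1}(x)\ge f_k(z_{k+1})+\langle s_{k+1},x-z_{k+1}\rangle$ for all $x$; (4) if iteration $k$ was a null step, $\rho_{k+1}\ge\rho_k$. An $\epsilon$-minimizer is a point $x$ with $f(x)-f^*\le\epsilon$. *)

From HB Require Import structures.
From mathcomp Require Import all_boot all_order all_algebra.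
From mathcomp Require Import all_classical all_reals.
From mathcomp Require Import exp.
Set Implicit Arguments. Unset Strict Implicit. Unset Printing Implicit Defensive.
Import Order.TTheory GRing.Theory Num.Theory.
Local Open Scope ring_scope.
Local Open Scope classical_set_scope.

Section Defs.
Variables (R : realType) (d : nat).
Local Notation V := 'rV[R]_d.

Definition dotp (u v : V) : R := \sum_(i < d) u 0 i * v 0 i.
Definition enorm (u : V) : R := Num.sqrt (dotp u u).

Definition convex_fun (f : V -> R) : Prop :=
  forall (x y : V) (t : R), 0 <= t -> t <= 1 ->
    f (t *: x + (1 - t) *: y) <= t * f x + (1 - t) * f y.

Definition lipschitz_fun (M : R) (f : V -> R) : Prop :=
  forall x y : V, `|f x - f y| <= M * enorm (x - y).

Definition is_subgrad (f : V -> R) (x g : V) : Prop :=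
  forall y : V, f x + dotp g (y - x) <= f y.

Definition argminset (f : V -> R) : set V :=
  [set x | forall y, f x <= f y].
Definition dist (x : V) (S : set V) : R :=
  inf [set r | exists2 y, S y & r = enorm (x - y)].

Definition is_min_value (f : V -> R) (fstar : R) : Prop :=
  (forall y, fstar <= f y) /\ (exists xs, f xs = fstar).

Definition descent_test (beta : R) (f : V -> R) (xk zk1 : V) (fk : V -> R) : bool :=
  beta * (f xk - fk zk1) <= f xk - f zk1.

(* A run of the Proximal Bundle Method with subgradient oracle g,
   iterates x, proximal points z, models fm, stepsizes rho.
   The iteration rules are required only while x_k is not optimal
   (i.e. while rho_k > 0 and the method is well defined). *)
Definition pbm_run (f : V -> R) (g : V -> V) (fstar beta : R)
  (x z : nat -> V) (fm : nat -> V -> R) (rho : nat -> R) : Prop :=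
  [/\ x 0%N = z 0%N,
      (forall y, fm 0%N y = f (x 0%N) + dotp (g (x 0%N)) (y - x 0%N)),
      (forall k, convex_fun (fm k)) &
      (forall k, fstar < f (x k) ->
            (forall y, fm k (z k.+1) + rho k / 2 * enorm (z k.+1 - x k) ^+ 2
                       <= fm k y + rho k / 2 * enorm (y - x k) ^+ 2) /\
            (if descent_test beta f (x k) (z k.+1) (fm k)
             then x k.+1 = z k.+1 else x k.+1 = x k) /\
            (forall y, fm k.+1 y <= f y) /\
            (forall y, f (z k.+1) + dotp (g (z k.+1)) (y - z k.+1) <= fm k.+1 y) /\
            (* (3) aggregation on null steps, s_{k+1} = rho_k (x_k - z_{k+1}) *)
            (~~ descent_test beta f (x k) (z k.+1) (fm k) ->
               forall y, fm k (z k.+1) + dotp (rho k *: (x k - z k.+1)) (y - z k.+1)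
                         <= fm k.+1 y) /\
            (~~ descent_test beta f (x k) (z k.+1) (fm k) -> rho k <= rho k.+1))].

Definition n_descent (beta : R) (f : V -> R) (x z : nat -> V) (fm : nat -> V -> R)
  (N : nat) : nat :=
  count (fun k => descent_test beta f (x k) (z k.+1) (fm k)) (iota 0 N).
Definition n_null (beta : R) (f : V -> R) (x z : nat -> V) (fm : nat -> V -> R)
  (N : nat) : nat :=
  count (fun k => ~~ descent_test beta f (x k) (z k.+1) (fm k)) (iota 0 N).

End Defs.

From HB Require Import structures.
From mathcomp Require Import all_boot all_order all_algebra.
From mathcomp Require Import all_classical all_reals.
From mathcomp Require Import exp.
From mathcomp Require Import ring lra.
Set Implicit Arguments. Unset Strict Implicit. Unset Printing Implicit Defensive.
Import Order.TTheory GRing.Theory Num.Theory.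
Local Open Scope ring_scope.
Local Open Scope classical_set_scope.

(* Write G_k = f(x_k) - min_y (f_k(y) + rho_k/2 |y - x_k|^2) for the proximal
   gap.  Since f_k <= f, the proximal value is at most f* + rho_k/2 dist(x_k, X* )^2,
   and the choice rho_k = (f(x_k) - f* )/D2 makes this at most halfway between
   f* and f(x_k): G_k >= (f(x_k) - f* )/2.  Hence every descent step contracts the
   optimality gap by 1 - beta/2, which bounds the number of descent steps by a
   logarithm.  During null steps x_k and rho_k are frozen, and the cut at z_{k+1}
   together with the aggregate cut force G_{k+1} <= G_k - c G_k^2 with
   c = (1 - beta)^2 rho_k / (4 M^2); so the potential 1/(c G_k) grows by one per
   null step, while it never exceeds 8 M^2 D2 / ((1 - beta)^2 (f(x_k) - f* )^2).
   Summing these bounds over the geometrically shrinking gaps counts the null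
   steps. *)

Section Euclid.
Variables (R : realType) (d : nat).
Local Notation V := 'rV[R]_d.
Implicit Types (u v w : V) (a : R).

Lemma dotpC u v : dotp u v = dotp v u.
Proof. by apply: eq_bigr => i _; rewrite mulrC. Qed.

Lemma dotpDl u v w : dotp (u + v) w = dotp u w + dotp v w.
Proof. by rewrite /dotp -big_split; apply: eq_bigr => i _; rewrite !mxE mulrDl. Qed.

Lemma dotpZl a u w : dotp (a *: u) w = a * dotp u w.
Proof. by rewrite /dotp mulr_sumr; apply: eq_bigr => i _; rewrite !mxE mulrA. Qed.

Lemma dotpNl u w : dotp (- u) w = - dotp u w.
Proof. by rewrite -scaleN1r dotpZl mulN1r. Qed.

Lemma dotpBl u v w : dotp (u - v) w = dotp u w - dotp v w.
Proof. by rewrite dotpDl dotpNl. Qed.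

Lemma dotpDr u v w : dotp w (u + v) = dotp w u + dotp w v.
Proof. by rewrite !(dotpC w) dotpDl. Qed.

Lemma dotpZr a u w : dotp w (a *: u) = a * dotp w u.
Proof. by rewrite !(dotpC w) dotpZl. Qed.

Lemma dotpBr u v w : dotp w (u - v) = dotp w u - dotp w v.
Proof. by rewrite !(dotpC w) dotpBl. Qed.

Lemma dotpp_ge0 u : 0 <= dotp u u.
Proof. by apply: sumr_ge0 => i _; rewrite -expr2 sqr_ge0. Qed.

Lemma dotpDD u v : dotp (u + v) (u + v) = dotp u u + 2 * dotp u v + dotp v v.
Proof. by rewrite dotpDl !dotpDr (dotpC v u); ring. Qed.

Lemma enorm_ge0 u : 0 <= enorm u.
Proof. exact: sqrtr_ge0. Qed.

Lemma enorm_sqr u : enorm u ^+ 2 = dotp u u.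
Proof. by rewrite sqr_sqrtr // dotpp_ge0. Qed.

Lemma enormN u : enorm (- u) = enorm u.
Proof. by rewrite /enorm dotpNl dotpC dotpNl opprK. Qed.

Lemma enorm0 : enorm (0 : V) = 0.
Proof. by rewrite /enorm -(scale0r (0 : V)) dotpZl mul0r sqrtr0. Qed.

Lemma dotpp_addr_le u v : dotp (u + v) (u + v) <= 2 * dotp u u + 2 * dotp v v.
Proof.
have := dotpp_ge0 (u - v); rewrite dotpBl !dotpBr (dotpC v u) dotpDD; lra.
Qed.

Lemma dotp_sqr_ge (rho : R) u w :
  0 < rho -> - (dotp u u / (2 * rho)) <= dotp u w + rho / 2 * dotp w w.
Proof.
move=> rho_gt0; have := dotpp_ge0 (u + rho *: w).
rewrite dotpDD !dotpZl !dotpZr => sq_ge0.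
rewrite -subr_ge0.
have -> : dotp u w + rho / 2 * dotp w w - - (dotp u u / (2 * rho))
  = (dotp u u + 2 * (rho * dotp u w) + rho * (rho * dotp w w)) / (2 * rho).
  by field; rewrite gt_eqF.
apply: divr_ge0; last lra.
by move: sq_ge0; rewrite !mulrA; lra.
Qed.

Lemma le_dist_sqr (S : set V) u c :
  S !=set0 -> 0 <= c -> (forall v, S v -> c <= enorm (u - v) ^+ 2) ->
  c <= dist u S ^+ 2.
Proof.
move=> [v0 Sv0] c_ge0 le_c.
have sqrt_le : Num.sqrt c <= dist u S.
  apply: lb_le_inf; first by exists (enorm (u - v0)); exists v0.
  move=> _ [v Sv ->]; rewrite -(ger0_norm (enorm_ge0 _)) -sqrtr_sqr.
  by rewrite ler_sqrt ?sqr_ge0 ?le_c.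
rewrite -(sqr_sqrtr c_ge0) ler_sqr ?nnegrE ?sqrtr_ge0 //.
exact: le_trans (sqrtr_ge0 c) sqrt_le.
Qed.

End Euclid.

Section ProximalStep.
Variables (R : realType) (d : nat).
Local Notation V := 'rV[R]_d.

Lemma subgrad_sqnorm_le (f : V -> R) (M : R) (y g : V) :
  lipschitz_fun M f -> is_subgrad f y g -> dotp g g <= M ^+ 2.
Proof.
move=> f_lip g_sub.
have := g_sub (y + g); have := f_lip (y + g) y.
rewrite addrAC subrr add0r => lip sub.
have g_le : enorm g ^+ 2 <= M * enorm g.
  by rewrite enorm_sqr; have := ler_norm (f (y + g) - f y); lra.
rewrite -enorm_sqr; have := enorm_ge0 g; nra.
Qed.

Lemma cut_prox_gap_le (f fk : V -> R) (x z g : V) (M rho : R) :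
  (forall y, f x + dotp g (y - x) <= fk y) -> dotp g g <= M ^+ 2 -> 0 < rho ->
  (f x - (fk z + rho / 2 * enorm (z - x) ^+ 2)) * rho <= M ^+ 2 / 2.
Proof.
move=> cut g_le rho_gt0; have := cut z; have := dotp_sqr_ge g (z - x) rho_gt0.
rewrite enorm_sqr => sq cut_z.
have gap_le : f x - (fk z + rho / 2 * dotp (z - x) (z - x)) <= dotp g g / (2 * rho).
  by lra.
have -> : M ^+ 2 / 2 = M ^+ 2 / (2 * rho) * rho by field; rewrite gt_eqF.
rewrite ler_pM2r //; apply: le_trans gap_le _.
by rewrite ler_pM2r // invr_gt0 mulr_gt0.
Qed.

Lemma prox_value_le_dist (f fk : V -> R) (fstar : R) (x : V) (v rho : R) :
  is_min_value f fstar -> (forall y, fk y <= f y) ->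
  (forall y, v <= fk y + rho / 2 * enorm (y - x) ^+ 2) -> 0 < rho ->
  v <= fstar + rho / 2 * dist x (argminset f) ^+ 2.
Proof.
move=> [fstar_le [xs fxs]] fk_le v_le rho_gt0.
have [v_le_fstar | fstar_lt_v] := lerP v fstar.
  have : 0 <= rho / 2 * dist x (argminset f) ^+ 2.
    by rewrite mulr_ge0 ?sqr_ge0 // divr_ge0 // ltW.
  lra.
suff : 2 * (v - fstar) / rho <= dist x (argminset f) ^+ 2.
  by rewrite ler_pdivrMr //; lra.
apply: le_dist_sqr.
- by exists xs => y; rewrite fxs.
- by rewrite divr_ge0 ?ltW //; lra.
- move=> y y_min; have fy : f y = fstar by have := y_min xs; have := fstar_le y; lra.
  rewrite ler_pdivrMr //; have := v_le y; have := fk_le y.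
  by rewrite -enormN opprB; lra.
Qed.

(* Mix the cut at z with the aggregate cut with weight lam and complete the
   square in y - z; the failed descent test turns f z - fk z into a multiple
   of the proximal gap f x - v. *)
Lemma null_step_prox_value_ge (f fk fk1 : V -> R) (x z y g : V) (M rho lam beta : R) :
  0 <= beta -> 0 < rho -> 0 <= lam -> lam <= (1 - beta) / 2 ->
  fk z + dotp (rho *: (x - z)) (y - z) <= fk1 y ->
  f z + dotp g (y - z) <= fk1 y ->
  dotp g g <= M ^+ 2 ->
  f x - f z < beta * (f x - fk z) ->
  let v := fk z + rho / 2 * enorm (z - x) ^+ 2 in
  v + lam * (1 - beta) * (f x - v) - lam ^+ 2 * M ^+ 2 / rho
    <= fk1 y + rho / 2 * enorm (y - x) ^+ 2.
Proof.
move=> beta_ge0 rho_gt0 lam_ge0 lam_le agg cut g_le null /=.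
have -> : y - x = (y - z) + (z - x) by rewrite addrA subrK.
move: agg; rewrite -[x - z]opprB scalerN dotpNl dotpZl !enorm_sqr.
move: cut; set u := z - x; set w := y - z => cut agg.
have combined : (1 - lam) * (fk z - rho * dotp u w) + lam * (f z + dotp g w) <= fk1 y.
  have : (1 - lam) * (fk z - rho * dotp u w) <= (1 - lam) * fk1 y.
    by rewrite ler_wpM2l //; lra.
  have : lam * (f z + dotp g w) <= lam * fk1 y by rewrite ler_wpM2l.
  lra.
set a := lam *: (g + rho *: u).
have sq := dotp_sqr_ge a w rho_gt0.
have aa_le : dotp a a / (2 * rho) <= lam ^+ 2 * M ^+ 2 / rho + lam ^+ 2 * rho * dotp u u.
  have -> : lam ^+ 2 * M ^+ 2 / rho + lam ^+ 2 * rho * dotp u u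
      = lam ^+ 2 * (2 * M ^+ 2 + 2 * (rho ^+ 2 * dotp u u)) / (2 * rho).
    by field; rewrite gt_eqF.
  rewrite ler_pM2r ?invr_gt0 ?mulr_gt0 // /a dotpZl dotpZr mulrA -expr2.
  rewrite ler_wpM2l ?sqr_ge0 //; apply: le_trans (dotpp_addr_le _ _) _.
  by rewrite dotpZl dotpZr; lra.
have null_lam : lam * ((1 - beta) * (f x - fk z)) <= lam * (f z - fk z).
  by rewrite ler_wpM2l //; lra.
have slack : 0 <= lam * rho * dotp u u * ((1 - beta) / 2 - lam).
  by rewrite !mulr_ge0 ?dotpp_ge0 ?subr_ge0 // ltW.
have aw : dotp a w = lam * (dotp g w + rho * dotp u w).
  by rewrite /a dotpZl dotpDl dotpZl.
rewrite aw in sq; rewrite dotpDD (dotpC w u).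
lra.
Qed.

End ProximalStep.

Section Counting.
Variable R : realType.

Lemma count_iota_succ (s : pred nat) (n : nat) :
  count s (iota 0 n.+1) = (count s (iota 0 n) + s n)%N.
Proof. by rewrite -addn1 iotaD count_cat /= addn0. Qed.

Lemma gap_le_geometric (s : pred nat) (Delta : nat -> R) (q : R) (N : nat) :
  0 <= q ->
  (forall k, (k.+1 < N)%N -> Delta k.+1 <= (if s k then q * Delta k else Delta k)) ->
  forall k, (k < N)%N -> Delta k <= q ^+ count s (iota 0 k) * Delta 0%N.
Proof.
move=> q_ge0 step; elim=> [|k IH] lt_kN; first by rewrite expr0 mul1r.
have := step k lt_kN; have := IH (ltnW lt_kN); rewrite count_iota_succ.
case: (s k) => IHk le_k; last by rewrite addn0; apply: le_trans le_k IHk.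
by rewrite addn1 exprS -mulrA; apply: le_trans le_k _; apply: ler_wpM2l.
Qed.

Lemma succ_le_ceil (m : nat) (c : R) : m%:R < c -> m.+1%:R <= (Num.ceil c)%:~R :> R.
Proof.
move=> lt_mc; have : (m%:Z < Num.ceil c) by rewrite ltNge ceil_le_int -ltNge.
by rewrite -lezD1 -(ler_int R) intrD -natr1.
Qed.

Lemma succ_le_ceil_log (beta eps D0 : R) (m : nat) :
  0 < beta -> beta < 2 -> 0 < eps -> eps < (1 - beta / 2) ^+ m * D0 ->
  m.+1%:R <= (Num.ceil (2 * ln (D0 / eps) / beta))%:~R :> R.
Proof.
move=> beta_gt0 beta_lt2 eps_gt0 eps_lt; apply: succ_le_ceil.
set q := 1 - beta / 2 in eps_lt; have qm_gt0 : 0 < q ^+ m by rewrite exprn_gt0 // /q; lra.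
have D0_gt0 : 0 < D0 by rewrite -(pmulr_rgt0 _ qm_gt0); lra.
have : ln (eps / D0) < ln (q ^+ m).
  by rewrite ltr_ln ?posrE ?divr_gt0 // ltr_pdivrMr // mulrC.
rewrite lnXn /q; last lra.
rewrite -[eps / D0]invf_div lnV ?posrE ?divr_gt0 //.
have : ln (1 - beta / 2) <= - (beta / 2) by apply: le_ln1Dx; lra.
rewrite ltr_pdivlMr // -mulr_natr.
have := ler0n R m; nra.
Qed.

Lemma invf_add1_le (t t' : R) :
  0 < t -> 0 < t' -> t' <= t - t ^+ 2 -> t^-1 + 1 <= t'^-1.
Proof.
move=> t_gt0 t'_gt0 t'_le; have tt_gt0 : 0 < t - t ^+ 2 by lra.
apply: le_trans (_ : (t - t ^+ 2)^-1 <= _); last by rewrite lef_pV2 ?posrE.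
have -> : t^-1 + 1 = (1 - t ^+ 2) / (t - t ^+ 2).
  by field; apply/andP; split; rewrite ?gt_eqF //; lra.
by rewrite -[X in _ <= X]mul1r ler_pM2r ?invr_gt0 // gerBl sqr_ge0.
Qed.

(* The potential P rises by one per null step and is bounded by B; a descent
   step may reset P, but B grows by the factor 1/r at each one, so the
   geometric sum of the resets stays below r B / (1 - r). *)
Lemma null_count_le (s : pred nat) (P B : nat -> R) (r : R) (N : nat) :
  0 <= r -> r < 1 ->
  (forall k, (k < N)%N -> 1 <= P k <= B k) ->
  (forall k, (k.+1 < N)%N -> s k -> B k <= r * B k.+1) ->
  (forall k, (k.+1 < N)%N -> ~~ s k -> B k.+1 = B k /\ P k + 1 <= P k.+1) ->
  forall k, (k < N)%N -> (count (predC s) (iota 0 k.+1))%:R <= B k / (1 - r).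
Proof.
move=> r_ge0 r_lt1 P_bnd descent null.
have r1_gt0 : 0 < 1 - r by lra.
have inv k : (k < N)%N -> (count (predC s) (iota 0 k))%:R + 1 <= r * B k / (1 - r) + P k.
  elim: k => [|k IH] lt_kN.
    have [P_ge1 P_le] := andP (P_bnd 0%N lt_kN).
    have : 0 <= r * B 0%N / (1 - r) by apply: divr_ge0; [apply: mulr_ge0|]; lra.
    by rewrite /= add0r; lra.
  have {IH}IH := IH (ltnW lt_kN); have [_ P_le] := andP (P_bnd k (ltnW lt_kN)).
  have [P1_ge1 _] := andP (P_bnd k.+1 lt_kN).
  rewrite count_iota_succ /=; case: (boolP (s k)) => sk /=.
    have B_le := descent k lt_kN sk; rewrite addn0; apply: le_trans IH _.
    have : r * B k / (1 - r) + B k <= r * B k.+1 / (1 - r).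
      have -> : r * B k / (1 - r) + B k = B k / (1 - r) by field; lra.
      by rewrite ler_pM2r ?invr_gt0.
    lra.
  have [-> P_up] := null k lt_kN sk; rewrite addn1 natr1; lra.
move=> k lt_kN; rewrite count_iota_succ natrD.
have [_ P_le] := andP (P_bnd k lt_kN); have := inv k lt_kN.
have -> : B k / (1 - r) = r * B k / (1 - r) + B k by field; lra.
by case: (predC s k) => /=; lra.
Qed.

End Counting.

Section ProximalBundleRun.
Variables (R : realType) (d : nat).
Local Notation V := 'rV[R]_d.
Variables (f : V -> R) (M : R) (g : V -> V) (fstar beta D2 eps : R).
Variables (x z : nat -> V) (fm : nat -> V -> R) (rho : nat -> R) (N : nat).
Hypotheses (f_lip : lipschitz_fun M f) (f_min : is_min_value f fstar).
Hypothesis g_subgrad : forall y, is_subgrad f y (g y).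
Hypotheses (beta_gt0 : 0 < beta) (beta_lt1 : beta < 1) (D2_gt0 : 0 < D2).
Hypothesis level_dist : forall y, f y <= f (x 0%N) -> dist y (argminset f) ^+ 2 <= D2.
Hypothesis rho_def : forall k, rho k = (f (x k) - fstar) / D2.
Hypothesis run : pbm_run f g fstar beta x z fm rho.
Hypothesis eps_lt_gap : forall k, (k < N)%N -> eps < f (x k) - fstar.
Hypothesis eps_gt0 : 0 < eps.

Local Notation descent k := (descent_test beta f (x k) (z k.+1) (fm k)).

Definition prox_gap k :=
  f (x k) - (fm k (z k.+1) + rho k / 2 * enorm (z k.+1 - x k) ^+ 2).

Lemma gap_gt0 k : (k < N)%N -> 0 < f (x k) - fstar.
Proof. by move=> /eps_lt_gap; apply: lt_trans. Qed.

Lemma rho_gt0 k : (k < N)%N -> 0 < rho k.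
Proof. by move=> /gap_gt0 ?; rewrite rho_def divr_gt0. Qed.

Lemma lipschitz_gt0 k : (k < N)%N -> 0 < M.
Proof.
move=> /(leq_ltn_trans (leq0n k)) /gap_gt0 gap0; have [_ [xs fxs]] := f_min.
have := f_lip (x 0%N) xs; have := ler_norm (f (x 0%N) - f xs).
by have := enorm_ge0 (x 0%N - xs); rewrite fxs; nra.
Qed.

Lemma step_rules k : (k < N)%N ->
  [/\ forall y, fm k (z k.+1) + rho k / 2 * enorm (z k.+1 - x k) ^+ 2
                  <= fm k y + rho k / 2 * enorm (y - x k) ^+ 2,
      x k.+1 = (if descent k then z k.+1 else x k),
      forall y, fm k.+1 y <= f y,
      forall y, f (z k.+1) + dotp (g (z k.+1)) (y - z k.+1) <= fm k.+1 y &
      ~~ descent k -> forall y,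
        fm k (z k.+1) + dotp (rho k *: (x k - z k.+1)) (y - z k.+1) <= fm k.+1 y].
Proof.
move=> /gap_gt0 gap_k; case: run => _ _ _ /(_ k) [|prox [xS [low [cut [agg _]]]]].
  by lra.
by split=> //; case: ifP xS.
Qed.

Lemma model_le_f k : (k < N)%N -> forall y, fm k y <= f y.
Proof.
case: k => [_ y | k /ltnW /step_rules[] //].
by case: run => _ -> _ _; apply: g_subgrad.
Qed.

Lemma f_nonincreasing k : (k < N)%N -> f (x k.+1) <= f (x k).
Proof.
move=> lt_kN; have [prox -> _ _ _] := step_rules lt_kN.
case: ifP => // test; rewrite /descent_test in test.
have model_le : fm k (z k.+1) <= f (x k).
  have := prox (x k); rewrite subrr enorm0 expr0n mulr0 addr0.
  have := model_le_f lt_kN (x k); have := rho_gt0 lt_kN.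
  have := sqr_ge0 (enorm (z k.+1 - x k)); nra.
have := ltW beta_gt0; nra.
Qed.

Lemma f_le_start k : (k < N)%N -> f (x k) <= f (x 0%N).
Proof.
elim: k => // k IH lt_kN.
exact: le_trans (f_nonincreasing (ltnW lt_kN)) (IH (ltnW lt_kN)).
Qed.

Lemma prox_gap_ge_half k : (k < N)%N -> (f (x k) - fstar) / 2 <= prox_gap k.
Proof.
move=> lt_kN; have [prox _ _ _ _] := step_rules lt_kN.
have := prox_value_le_dist f_min (model_le_f lt_kN) prox (rho_gt0 lt_kN).
have dist_le := level_dist (f_le_start lt_kN).
(* this is where the choice rho_k = (f(x_k) - f* ) / D2 enters *)
have : rho k * dist (x k) (argminset f) ^+ 2 <= f (x k) - fstar.
  by rewrite rho_def mulrAC ler_pdivrMr // ler_wpM2l // ltW // gap_gt0.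
rewrite /prox_gap; lra.
Qed.

Lemma prox_gap_gt0 k : (k < N)%N -> 0 < prox_gap k.
Proof.
by move=> lt_kN; apply: lt_le_trans (prox_gap_ge_half lt_kN); rewrite divr_gt0 ?gap_gt0.
Qed.

Lemma gap_descent_step k : (k < N)%N -> descent k ->
  f (x k.+1) - fstar <= (1 - beta / 2) * (f (x k) - fstar).
Proof.
move=> lt_kN test; have [_ -> _ _ _] := step_rules lt_kN.
rewrite test; rewrite /descent_test in test.
have := prox_gap_ge_half lt_kN; rewrite /prox_gap => half.
have : 0 <= rho k / 2 * enorm (z k.+1 - x k) ^+ 2.
  by rewrite mulr_ge0 ?sqr_ge0 // divr_ge0 // ltW // rho_gt0.
have := ler_wpM2l (ltW beta_gt0) (_ : (f (x k) - fstar) / 2 <= f (x k) - fm k (z k.+1)).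
lra.
Qed.

Definition null_rate k := (1 - beta) ^+ 2 * rho k / (4 * M ^+ 2).

Lemma null_rate_gt0 k : (k < N)%N -> 0 < null_rate k.
Proof.
move=> lt_kN; have M_gt0 := lipschitz_gt0 lt_kN.
by rewrite divr_gt0 ?mulr_gt0 ?exprn_gt0 ?rho_gt0 // subr_gt0.
Qed.

Lemma null_step_frozen k : (k < N)%N -> ~~ descent k -> x k.+1 = x k /\ rho k.+1 = rho k.
Proof.
by move=> /step_rules[_ xS _ _ _] /negbTE null; rewrite !rho_def xS null.
Qed.

Lemma null_step_prox_gap k : (k < N)%N -> ~~ descent k ->
  prox_gap k * rho k <= M ^+ 2 / 2 ->
  prox_gap k.+1 <= prox_gap k - null_rate k * prox_gap k ^+ 2.
Proof.
move=> lt_kN null Grho_le; have [_ _ _ cut agg] := step_rules lt_kN.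
have [xS rhoS] := null_step_frozen lt_kN null.
have rho_k := rho_gt0 lt_kN.
have M_gt0 := lipschitz_gt0 lt_kN.
have M2_gt0 : 0 < 2 * M ^+ 2 by rewrite mulr_gt0 ?exprn_gt0.
have G_ge0 := ltW (prox_gap_gt0 lt_kN).
(* the unconstrained maximizer of lam (1 - beta) G - lam^2 M^2 / rho *)
pose lam := (1 - beta) * prox_gap k * rho k / (2 * M ^+ 2).
have beta1 : 0 <= 1 - beta by rewrite subr_ge0 ltW.
have lam_ge0 : 0 <= lam.
  exact: divr_ge0 (mulr_ge0 (mulr_ge0 beta1 G_ge0) (ltW rho_k)) (ltW M2_gt0).
have lam_le : lam <= (1 - beta) / 2.
  by rewrite /lam ler_pdivrMr // -!mulrA ler_wpM2l //; lra.
have := null_step_prox_value_ge (ltW beta_gt0) rho_k lam_ge0 lam_le (agg null (z k.+2))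
  (cut (z k.+2)) (subgrad_sqnorm_le f_lip (g_subgrad _)) _.
rewrite ltNge => /(_ null) /= core.
have rate : lam * (1 - beta) * prox_gap k - lam ^+ 2 * M ^+ 2 / rho k
    = null_rate k * prox_gap k ^+ 2.
  by rewrite /lam /null_rate; field; rewrite !gt_eqF.
move: rate core; rewrite /prox_gap xS rhoS; lra.
Qed.

Lemma prox_gap_rho_le k : (k < N)%N -> prox_gap k * rho k <= M ^+ 2 / 2.
Proof.
have g_le y := subgrad_sqnorm_le f_lip (g_subgrad y).
elim: k => [|k IH] lt_kN.
  apply: cut_prox_gap_le (g_le _) (rho_gt0 lt_kN) => y.
  by case: run => _ -> _ _.
have lt_k := ltnW lt_kN; have [_ xS _ cut _] := step_rules lt_k.
case: (boolP (descent k)) => [test | null].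
  apply: cut_prox_gap_le (g_le _) (rho_gt0 lt_kN) => y.
  by rewrite xS test; apply: cut.
have [_ rhoS] := null_step_frozen lt_k null; rewrite rhoS.
apply: le_trans _ (IH lt_k); rewrite ler_pM2r ?rho_gt0 //.
have := mulr_ge0 (ltW (null_rate_gt0 lt_k)) (sqr_ge0 (prox_gap k)).
have := null_step_prox_gap lt_k null (IH lt_k); lra.
Qed.

Lemma gap_step k : (k < N)%N ->
  f (x k.+1) - fstar
    <= (if descent k then (1 - beta / 2) * (f (x k) - fstar) else f (x k) - fstar).
Proof.
move=> lt_kN; case: ifP => test; first exact: gap_descent_step.
by have [-> _] := null_step_frozen lt_kN (negbT test).
Qed.

Definition potential k := (null_rate k * prox_gap k)^-1.

Lemma rate_gap_gt0 k : (k < N)%N -> 0 < null_rate k * prox_gap k.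
Proof.
by move=> lt_kN; rewrite mulr_gt0 ?null_rate_gt0 ?prox_gap_gt0.
Qed.

Lemma potential_ge1 k : (k < N)%N -> 1 <= potential k.
Proof.
move=> lt_kN; rewrite /potential invf_ge1 ?rate_gap_gt0 //.
have M_gt0 := lipschitz_gt0 lt_kN.
have M2_gt0 : 0 < 4 * M ^+ 2 by rewrite mulr_gt0 ?exprn_gt0.
have Grho_ge0 : 0 <= prox_gap k * rho k.
  by rewrite ltW // mulr_gt0 ?prox_gap_gt0 ?rho_gt0.
have -> : null_rate k * prox_gap k = (1 - beta) ^+ 2 * (prox_gap k * rho k) / (4 * M ^+ 2).
  by rewrite /null_rate; field; rewrite gt_eqF.
have beta2_le1 : (1 - beta) ^+ 2 <= 1 by have := beta_gt0; have := beta_lt1; nra.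
rewrite ler_pdivrMr // mul1r.
have := ler_pM (sqr_ge0 _) Grho_ge0 beta2_le1 (prox_gap_rho_le lt_kN).
have := ltW M2_gt0; lra.
Qed.

Lemma potential_le k : (k < N)%N ->
  potential k <= 8 * M ^+ 2 * D2 / (1 - beta) ^+ 2 / (f (x k) - fstar) ^+ 2.
Proof.
move=> lt_kN; have M_gt0 := lipschitz_gt0 lt_kN.
have gap_k := gap_gt0 lt_kN; have beta1 : 0 < 1 - beta by rewrite subr_gt0.
have rate_gap : 0 < null_rate k * ((f (x k) - fstar) / 2).
  by rewrite mulr_gt0 ?null_rate_gt0 ?divr_gt0.
have -> : 8 * M ^+ 2 * D2 / (1 - beta) ^+ 2 / (f (x k) - fstar) ^+ 2
    = (null_rate k * ((f (x k) - fstar) / 2))^-1.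
  by rewrite /null_rate rho_def; field; rewrite !gt_eqF.
rewrite /potential lef_pV2 ?posrE ?rate_gap_gt0 //.
by rewrite ler_wpM2l ?prox_gap_ge_half // ltW ?null_rate_gt0.
Qed.

Lemma potential_null_step k : (k.+1 < N)%N -> ~~ descent k ->
  potential k + 1 <= potential k.+1.
Proof.
move=> lt_kN null; have lt_k := ltnW lt_kN.
have [_ rhoS] := null_step_frozen lt_k null.
apply: invf_add1_le; rewrite ?rate_gap_gt0 // /null_rate rhoS -/(null_rate k).
have := ler_wpM2l (ltW (null_rate_gt0 lt_k))
  (null_step_prox_gap lt_k null (prox_gap_rho_le lt_k)).
lra.
Qed.

Lemma descent_steps_le : eps <= f (x 0%N) - fstar ->
  (n_descent beta f x z fm N)%:R
    <= (Num.ceil (2 * ln ((f (x 0%N) - fstar) / eps) / beta))%:~R :> R.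
Proof.
move=> eps_le; have [N0 | N_gt0] := posnP N.
  rewrite N0 /n_descent /= ler0z ceil_ge0.
  have : 0 <= ln ((f (x 0%N) - fstar) / eps).
    by apply: ln_ge0; rewrite ler_pdivlMr // mul1r.
  move=> ln_ge0; have : 0 <= 2 * ln ((f (x 0%N) - fstar) / eps) / beta.
    by rewrite divr_ge0 ?mulr_ge0 // ltW.
  lra.
rewrite /n_descent -(prednK N_gt0) count_iota_succ natrD.
have lt_KN : (N.-1 < N)%N by rewrite prednK.
have geo := @gap_le_geometric R (fun k => descent k) (fun k => f (x k) - fstar)
  (1 - beta / 2) N _ _ _ lt_KN.
have := @succ_le_ceil_log R beta eps (f (x 0%N) - fstar) _ beta_gt0 _ eps_gt0
  (lt_le_trans (eps_lt_gap lt_KN) (geo _ _)).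
have beta_lt2 : beta < 2 by have := beta_lt1; lra.
have q_ge0 : 0 <= 1 - beta / 2 by have := beta_lt1; lra.
move=> /(_ beta_lt2 q_ge0 (fun k lt_k => gap_step (ltnW lt_k))).
have : (descent N.-1 : nat)%:R <= 1 :> R by case: (descent _).
rewrite -natr1; lra.
Qed.

Lemma null_steps_le :
  (n_null beta f x z fm N)%:R
    <= 1 / (1 - (1 - beta / 2) ^+ 2) * (8 * M ^+ 2 * D2 / ((1 - beta) ^+ 2 * eps ^+ 2)).
Proof.
have beta1 : 0 < 1 - beta by rewrite subr_gt0.
have r_lt1 : (1 - beta / 2) ^+ 2 < 1 by have := beta_lt1; have := beta_gt0; nra.
have r1_gt0 : 0 < 1 - (1 - beta / 2) ^+ 2 by lra.
set A := 8 * M ^+ 2 * D2 / (1 - beta) ^+ 2.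
have -> : 1 / (1 - (1 - beta / 2) ^+ 2) * (8 * M ^+ 2 * D2 / ((1 - beta) ^+ 2 * eps ^+ 2))
    = A / eps ^+ 2 / (1 - (1 - beta / 2) ^+ 2).
  have : 0 < 4 - (2 - beta) ^+ 2 by lra.
  by move=> ?; rewrite /A; field; rewrite !gt_eqF.
have A_ge0 : 0 <= A.
  rewrite /A divr_ge0 ?sqr_ge0 //.
  by apply: mulr_ge0; [apply: mulr_ge0 => //; apply: sqr_ge0 | apply: ltW].
have [N0 | N_gt0] := posnP N.
  rewrite N0 /n_null /=.
  by apply: divr_ge0; [apply: divr_ge0 => //; apply: sqr_ge0 | apply: ltW].
have lt_KN : (N.-1 < N)%N by rewrite prednK.
rewrite /n_null -(prednK N_gt0).
apply: le_trans (@null_count_le R (fun k => descent k) potential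
  (fun k => A / (f (x k) - fstar) ^+ 2) ((1 - beta / 2) ^+ 2) N (sqr_ge0 _) r_lt1 _ _ _ _ lt_KN) _.
- by move=> k lt_kN; rewrite potential_ge1 ?potential_le.
- move=> k lt_kN test; have lt_k := ltnW lt_kN.
  have gap_sqr : (f (x k.+1) - fstar) ^+ 2 <= (1 - beta / 2) ^+ 2 * (f (x k) - fstar) ^+ 2.
    have := gap_descent_step lt_k test; have := gap_gt0 lt_kN; nra.
  rewrite mulrA ler_pdivrMr ?exprn_gt0 ?gap_gt0 // mulrAC.
  rewrite ler_pdivlMr ?exprn_gt0 ?gap_gt0 //; nra.
- move=> k lt_kN null; have [xS _] := null_step_frozen (ltnW lt_kN) null.
  by rewrite xS potential_null_step.
rewrite ler_pM2r ?invr_gt0 // ler_wpM2l // lef_pV2 ?posrE ?exprn_gt0 ?gap_gt0 //.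
by rewrite ler_sqr ?nnegrE ?ltW ?gap_gt0 ?eps_lt_gap.
Qed.

End ProximalBundleRun.

Theorem theorem5 (R : realType) (d : nat) (f : 'rV[R]_d -> R) (M : R)
  (g : 'rV[R]_d -> 'rV[R]_d) (fstar beta D2 eps : R)
  (x z : nat -> 'rV[R]_d) (fm : nat -> 'rV[R]_d -> R) (rho : nat -> R) :
  convex_fun f -> lipschitz_fun M f ->
  is_min_value f fstar ->
  (forall y, is_subgrad f y (g y)) ->
  0 < beta -> beta < 1 ->
  0 < D2 ->
  (forall y, f y <= f (x 0%N) -> dist y (argminset f) ^+ 2 <= D2) ->
  (forall k, rho k = (f (x k) - fstar) / D2) ->
  pbm_run f g fstar beta x z fm rho ->
  0 < eps -> eps <= f (x 0%N) - fstar ->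
  forall N : nat, (forall k, (k < N)%N -> eps < f (x k) - fstar) ->
    ((n_descent beta f x z fm N)%:R : R)
      <= (Num.ceil (2 * ln ((f (x 0%N) - fstar) / eps) / beta))%:~R /\
    ((n_null beta f x z fm N)%:R : R)
      <= (1 / (1 - (1 - beta / 2) ^+ 2)) * (8 * M ^+ 2 * D2 / ((1 - beta) ^+ 2 * eps ^+ 2)).
Proof.
move=> _ f_lip f_min g_sub beta_gt0 beta_lt1 D2_gt0 level rho_def run eps_gt0 eps_le N eps_lt.
split.
  exact: descent_steps_le f_min g_sub beta_gt0 beta_lt1 D2_gt0 level rho_def run eps_lt eps_gt0 eps_le.
exact: null_steps_le f_lip f_min g_sub beta_gt0 beta_lt1 D2_gt0 level rho_def run eps_lt eps_gt0.
Qed.
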